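(* Let $A$ be a Frobenius algebra over a field $\Bbbk$ and let $M,N$ be finite-dimensional left $A$-modules. Then there is an isomorphism of $\Bbbk$-vector spaces, natural in $M$ and $N$, \[ {\rm Hom}_{A\text{-}\underline{\mathrm{mod}}}(M,N)\cong{\rm Hom}_{A^e\text{-}\underline{\mathrm{mod}}}\big(A,{\rm Hom}_\Bbbk(M,N)\big), \] where $A$ is regarded as an $A^e$-module via left and right multiplication, and ${\rm Hom}_\Bbbk(M,N)$ is the $A^e$-module with $((a\otimes b)\cdot\phi)(m)=a\phi(bm)$.
   Context: $\Bbbk$ is a field and $\otimes=\otimes_\Bbbk$. A Frobenius algebra is a finite-dimensional $\Bbbk$-algebra $A$ with a Frobenius system $(\epsilon,\{a_i\}_{i\in I},\{b_i\}_{i\in I})$: a $\Bbbk$-linear $\epsilon:A\to\Bbbk$ and bases $\{a_i\},\{b_i\}$ of $A$ with $\sum_i a_i\epsilon(b_ia)=a=\sum_i\epsilon(aa_i)b_i$ for all $a\in A$. $A^e=A\otimes A^{\mathrm{op}}$ is the enveloping algebra (left $A^e$-modules are $(A,A)$-bimodules); it is again Frobenius. For a self-injective algebra $B$, the stable category $B\text{-}\underline{\mathrm{mod}}$ has objects the finitely generated left $B$-modules and morphism spaces ${\rm Hom}_B(X,Y)$ modulo the maps factoring through projective-injective $B$-modules. *)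

From HB Require Import structures.
From mathcomp Require Import all_boot all_order all_algebra all_field.
Set Implicit Arguments. Unset Strict Implicit. Unset Printing Implicit Defensive.
Import GRing.Theory.
Local Open Scope ring_scope.

Section Frob.
Variables (K : fieldType) (A : falgType K).

Definition frobenius_system (eps : 'Hom(A, K^o)) (a b : seq A) : Prop :=
  [/\ basis_of fullv a, basis_of fullv b, size b = size a &
      forall x : A,
        \sum_(i < size a) (eps (b`_i * x) : K) *: a`_i = x /\
        \sum_(i < size a) (eps (x * a`_i) : K) *: b`_i = x].

Definition frobenius_algebra : Prop :=
  exists eps a b, frobenius_system eps a b.

Record lmod := LMod { lmod_sort : vectType K; lmod_act : A -> 'End(lmod_sort) }.

Definition is_lmod (M : lmod) : Prop :=
  [/\ forall (k : K) (x y : A),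
        lmod_act M (k *: x + y) = k *: lmod_act M x + lmod_act M y,
      lmod_act M 1 = \1%VF &
      forall x y : A, lmod_act M (x * y) = (lmod_act M x \o lmod_act M y)%VF].

Definition is_lhom (M N : lmod) (f : 'Hom(lmod_sort M, lmod_sort N)) : Prop :=
  forall x : A, (f \o lmod_act M x)%VF = (lmod_act N x \o f)%VF.

Definition lprojective (P : lmod) : Prop :=
  forall (X Y : lmod) (g : 'Hom(lmod_sort X, lmod_sort Y))
         (h : 'Hom(lmod_sort P, lmod_sort Y)),
    is_lmod X -> is_lmod Y -> is_lhom g -> limg g = fullv -> is_lhom h ->
    exists2 h' : 'Hom(lmod_sort P, lmod_sort X), is_lhom h' & (g \o h')%VF = h.

Definition linjective (I : lmod) : Prop :=
  forall (X Y : lmod) (g : 'Hom(lmod_sort X, lmod_sort Y))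
         (h : 'Hom(lmod_sort X, lmod_sort I)),
    is_lmod X -> is_lmod Y -> is_lhom g -> lker g = 0%VS -> is_lhom h ->
    exists2 h' : 'Hom(lmod_sort Y, lmod_sort I), is_lhom h' & (h' \o g)%VF = h.

Definition lstable_zero (M N : lmod) (f : 'Hom(lmod_sort M, lmod_sort N)) : Prop :=
  exists P : lmod, [/\ is_lmod P, lprojective P, linjective P &
    exists g : 'Hom(lmod_sort M, lmod_sort P), exists h : 'Hom(lmod_sort P, lmod_sort N),
      [/\ is_lhom g, is_lhom h & f = (h \o g)%VF]].

(* ---------- A-bimodules (= left A^e-modules) ---------- *)
Record bimod := BiMod { bimod_sort : vectType K;
  bimod_lact : A -> 'End(bimod_sort); bimod_ract : A -> 'End(bimod_sort) }.

Definition is_bimod (M : bimod) : Prop :=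
  [/\ forall (k : K) (x y : A),
        bimod_lact M (k *: x + y) = k *: bimod_lact M x + bimod_lact M y,
      forall (k : K) (x y : A),
        bimod_ract M (k *: x + y) = k *: bimod_ract M x + bimod_ract M y,
      bimod_lact M 1 = \1%VF /\ bimod_ract M 1 = \1%VF,
      forall x y : A, bimod_lact M (x * y) = (bimod_lact M x \o bimod_lact M y)%VF
                   /\ bimod_ract M (x * y) = (bimod_ract M y \o bimod_ract M x)%VF &
      forall x y : A, (bimod_lact M x \o bimod_ract M y)%VF
                    = (bimod_ract M y \o bimod_lact M x)%VF].

Definition is_bihom (M N : bimod) (f : 'Hom(bimod_sort M, bimod_sort N)) : Prop :=
  forall x : A, (f \o bimod_lact M x)%VF = (bimod_lact N x \o f)%VF /\
                (f \o bimod_ract M x)%VF = (bimod_ract N x \o f)%VF.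

Definition biprojective (P : bimod) : Prop :=
  forall (X Y : bimod) (g : 'Hom(bimod_sort X, bimod_sort Y))
         (h : 'Hom(bimod_sort P, bimod_sort Y)),
    is_bimod X -> is_bimod Y -> is_bihom g -> limg g = fullv -> is_bihom h ->
    exists2 h' : 'Hom(bimod_sort P, bimod_sort X), is_bihom h' & (g \o h')%VF = h.

Definition biinjective (I : bimod) : Prop :=
  forall (X Y : bimod) (g : 'Hom(bimod_sort X, bimod_sort Y))
         (h : 'Hom(bimod_sort X, bimod_sort I)),
    is_bimod X -> is_bimod Y -> is_bihom g -> lker g = 0%VS -> is_bihom h ->
    exists2 h' : 'Hom(bimod_sort Y, bimod_sort I), is_bihom h' & (h' \o g)%VF = h.

Definition bistable_zero (M N : bimod) (f : 'Hom(bimod_sort M, bimod_sort N)) : Prop :=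
  exists P : bimod, [/\ is_bimod P, biprojective P, biinjective P &
    exists g : 'Hom(bimod_sort M, bimod_sort P), exists h : 'Hom(bimod_sort P, bimod_sort N),
      [/\ is_bihom g, is_bihom h & f = (h \o g)%VF]].

Definition regular_bimod : bimod :=
  @BiMod (A : vectType K) (fun a => linfun (fun x : A => a * x))
                          (fun b => linfun (fun x : A => x * b)).

Definition homk_bimod (M N : lmod) : bimod :=
  @BiMod 'Hom(lmod_sort M, lmod_sort N)
    (fun a => linfun (fun phi : 'Hom(lmod_sort M, lmod_sort N) => (lmod_act N a \o phi)%VF))
    (fun b => linfun (fun phi : 'Hom(lmod_sort M, lmod_sort N) => (phi \o lmod_act M b)%VF)).

Definition homk_map (M M' N N' : lmod) (u : 'Hom(lmod_sort M', lmod_sort M))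
  (v : 'Hom(lmod_sort N, lmod_sort N')) :
  'Hom('Hom(lmod_sort M, lmod_sort N), 'Hom(lmod_sort M', lmod_sort N')) :=
  linfun (fun phi : 'Hom(lmod_sort M, lmod_sort N) => (v \o phi \o u)%VF).

End Frob.

From HB Require Import structures.
From mathcomp Require Import all_boot all_order all_algebra all_field.
Import GRing.Theory.
Local Open Scope ring_scope.
Set Implicit Arguments. Unset Strict Implicit. Unset Printing Implicit Defensive.

(* The map f |-> (c |-> c f) identifies A-linear maps M -> N with bimodule
   maps A -> Hom_k(M, N), since a bimodule map g from A is determined by g 1.
   It remains to see that both sides have the same maps factoring through
   projective-injectives.  With the dual bases (a_i), (b_i) of the Frobenius
   system, Higman's criterion says that a module map factors through a
   projective-injective iff it is a trace sum_i a_i t b_i of a k-linear t, and a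
   bimodule map iff it is a two-sided trace x |-> sum_(i,j) a_i t(b_i x a_j) b_j: a
   module is injective, equivalently projective, exactly when its identity is
   such a trace, and the identities of the coinduced modules Hom_k(A, V) and
   Hom_k(A, Hom_k(A, V)) are traces.  Centrality of the Casimir element
   sum_i a_i (x) b_i makes traces module maps, and it turns the image of a
   one-sided trace into a two-sided trace and back. *)

Section LinearMaps.
Variable K : fieldType.
Implicit Types U V W Y : vectType K.

Lemma linfun_linearE U V (f : U -> V) : linear f -> linfun f =1 f.
Proof.
move=> f_lin u.
pose fL : {linear U -> V} := HB.pack f (GRing.isLinear.Build K U V *:%R f f_lin).
exact: (lfunE fL u).
Qed.

Lemma linear_sumZ U V (f : U -> V) : linear f ->
  forall n (k : 'I_n -> K) (u : 'I_n -> U),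
  f (\sum_(i < n) k i *: u i) = \sum_(i < n) k i *: f (u i).
Proof.
move=> f_lin n k u.
pose fL : {linear U -> V} := HB.pack f (GRing.isLinear.Build K U V *:%R f f_lin).
by rewrite -[f _]/(fL _) linear_sum; apply: eq_bigr => i _; rewrite linearZ.
Qed.

Definition linfun2 Y U V (F : Y -> U -> V) : 'Hom(Y, 'Hom(U, V)) :=
  linfun (fun y => linfun (F y)).

Lemma linfun2E Y U V (F : Y -> U -> V) :
  (forall y, linear (F y)) -> (forall u, linear (F ^~ u)) ->
  forall y u, linfun2 F y u = F y u.
Proof.
move=> F_linr F_linl y u; rewrite linfun_linearE ?linfun_linearE // => k y1 y2.
by apply/lfunP => v; rewrite add_lfunE scale_lfunE !linfun_linearE // F_linl.
Qed.

Definition linfun3 Y U1 U2 V (F : Y -> U1 -> U2 -> V) :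
  'Hom(Y, 'Hom(U1, 'Hom(U2, V))) := linfun (fun y => linfun2 (F y)).

Lemma linfun3E Y U1 U2 V (F : Y -> U1 -> U2 -> V) :
  (forall y u1, linear (F y u1)) -> (forall y u2, linear (F y ^~ u2)) ->
  (forall u1 u2, linear (fun y => F y u1 u2)) ->
  forall y u1 u2, linfun3 F y u1 u2 = F y u1 u2.
Proof.
move=> F_lin3 F_lin2 F_lin1 y u1 u2; rewrite linfun_linearE ?linfun2E // => k y1 y2.
apply/lfunP => v1; apply/lfunP => v2.
by rewrite !(add_lfunE, scale_lfunE) !linfun2E // F_lin1.
Qed.

Definition lfun_eval U V (u : U) : 'Hom('Hom(U, V), V) := linfun (fun f : 'Hom(U, V) => f u).

Lemma lfun_evalE U V (u : U) (f : 'Hom(U, V)) : lfun_eval V u f = f u.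
Proof. by rewrite linfun_linearE // => k f1 f2; rewrite add_lfunE scale_lfunE. Qed.

Lemma lfun_postcompE U V W (g : 'Hom(V, W)) (f : 'Hom(U, V)) :
  linfun (fun h : 'Hom(U, V) => (g \o h)%VF) f = (g \o f)%VF.
Proof. by rewrite linfun_linearE // => k h1 h2; rewrite comp_lfunDr comp_lfunZr. Qed.

Lemma lfun_precompE U V W (g : 'Hom(U, V)) (f : 'Hom(V, W)) :
  linfun (fun h : 'Hom(V, W) => (h \o g)%VF) f = (f \o g)%VF.
Proof. by rewrite linfun_linearE // => k h1 h2; rewrite comp_lfunDl comp_lfunZl. Qed.

End LinearMaps.

Section FrobeniusSystem.
Variables (K : fieldType) (A : falgType K) (eps : 'Hom(A, K^o)) (a b : seq A).
Hypothesis frobA : frobenius_system eps a b.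
Local Notation n := (size a).

Lemma frob_expandl x : \sum_(i < n) (eps (b`_i * x) : K) *: a`_i = x.
Proof. by case: frobA => _ _ _ /(_ x) []. Qed.

Lemma frob_expandr x : \sum_(i < n) (eps (x * a`_i) : K) *: b`_i = x.
Proof. by case: frobA => _ _ _ /(_ x) []. Qed.

(* Both sides equal [\sum_(i, j) eps (b_i c a_j) F a_i b_j]. *)
Lemma casimir_central (W : vectType K) (F : A -> A -> W) :
  (forall v, linear (F ^~ v)) -> (forall u, linear (F u)) ->
  forall c, \sum_(i < n) F (c * a`_i) b`_i = \sum_(i < n) F a`_i (b`_i * c).
Proof.
move=> F_linl F_linr c.
transitivity (\sum_(j < n) \sum_(i < n) (eps (b`_i * c * a`_j) : K) *: F a`_i b`_j).
  apply: eq_bigr => j _; rewrite -{1}(frob_expandl (c * a`_j)) (linear_sumZ (F_linl _)).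
  by apply: eq_bigr => i _; rewrite mulrA.
rewrite exchange_big; apply: eq_bigr => i _.
by rewrite -{2}(frob_expandr (b`_i * c)) (linear_sumZ (F_linr _)).
Qed.

End FrobeniusSystem.

Section Modules.
Variables (K : fieldType) (A : falgType K).

Lemma linfun_mulr (c x : A) : linfun (fun y : A => y * c) x = x * c.
Proof. by rewrite linfun_linearE // => k u v; rewrite mulrDl scalerAl. Qed.

Lemma linfun_mull (c x : A) : linfun (fun y : A => c * y) x = c * x.
Proof. by rewrite linfun_linearE // => k u v; rewrite mulrDr scalerAr. Qed.

Section LeftActions.
Variable M : lmod A.
Hypothesis M_lmod : is_lmod M.
Local Notation act := (lmod_act M).

Lemma lmod_actL k x y : act (k *: x + y) = k *: act x + act y.
Proof. by case: M_lmod. Qed.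

Lemma lmod_actD k x y m : act (k *: x + y) m = k *: act x m + act y m.
Proof. by rewrite lmod_actL add_lfunE scale_lfunE. Qed.

Lemma lmod_act1 m : act 1 m = m.
Proof. by case: M_lmod => _ -> _; rewrite id_lfunE. Qed.

Lemma lmod_actM x y : act (x * y) = (act x \o act y)%VF.
Proof. by case: M_lmod. Qed.

Lemma lmod_actMv x y m : act (x * y) m = act x (act y m).
Proof. by rewrite lmod_actM comp_lfunE. Qed.

End LeftActions.

Lemma lhomP (M N : lmod A) (f : 'Hom(lmod_sort M, lmod_sort N)) :
  is_lhom f -> forall c m, f (lmod_act M c m) = lmod_act N c (f m).
Proof. by move=> f_hom c m; rewrite -comp_lfunE f_hom comp_lfunE. Qed.

Lemma lhom_id (P : lmod A) : is_lhom (M := P) (N := P) \1%VF.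
Proof. by move=> c; rewrite comp_lfun1l comp_lfun1r. Qed.

Definition coind (V : vectType K) : lmod A :=
  @LMod K A 'Hom(A, V)
    (fun c => linfun (fun phi : 'Hom(A, V) => (phi \o linfun (fun x : A => x * c))%VF)).

Lemma coindE (V : vectType K) c (phi : 'Hom(A, V)) x :
  lmod_act (coind V) c phi x = phi (x * c).
Proof. by rewrite /= lfun_precompE comp_lfunE linfun_mulr. Qed.

Lemma coind_is_lmod (V : vectType K) : is_lmod (coind V).
Proof.
split=> [k x y||x y]; apply/lfunP => phi; apply/lfunP => z.
- by rewrite !(add_lfunE, scale_lfunE) !coindE mulrDr -scalerAr linearP.
- by rewrite coindE id_lfunE mulr1.
- by rewrite comp_lfunE !coindE mulrA.
Qed.

(* The adjunct of [t] under Hom_k(M, V) = Hom_A(M, coind V). *)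
Definition coind_adj (M : lmod A) (V : vectType K) (t : 'Hom(lmod_sort M, V)) :
  'Hom(lmod_sort M, lmod_sort (coind V)) :=
  linfun2 (fun (m : lmod_sort M) (x : A) => t (lmod_act M x m)).

Lemma coind_adjE (M : lmod A) (V : vectType K) (t : 'Hom(lmod_sort M, V)) m x :
  is_lmod M -> coind_adj t m x = t (lmod_act M x m).
Proof.
move=> M_lmod; apply: linfun2E => [m' k x1 x2|x' k m1 m2]; last by rewrite !linearP.
by rewrite lmod_actD // linearP.
Qed.

Lemma coind_adj_lhom (M : lmod A) (V : vectType K) (t : 'Hom(lmod_sort M, V)) :
  is_lmod M -> is_lhom (N := coind V) (coind_adj t).
Proof.
move=> M_lmod c; apply/lfunP => m; apply/lfunP => x.
by rewrite !comp_lfunE coindE !coind_adjE // lmod_actMv.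
Qed.

Section BiActions.
Variable X : bimod A.
Hypothesis X_bimod : is_bimod X.
Local Notation lact := (bimod_lact X).
Local Notation ract := (bimod_ract X).

Lemma bimod_lactD k x y v : lact (k *: x + y) v = k *: lact x v + lact y v.
Proof. by case: X_bimod => -> _ _ _ _; rewrite add_lfunE scale_lfunE. Qed.

Lemma bimod_ractD k x y v : ract (k *: x + y) v = k *: ract x v + ract y v.
Proof. by case: X_bimod => _ -> _ _ _; rewrite add_lfunE scale_lfunE. Qed.

Lemma bimod_lact1 v : lact 1 v = v.
Proof. by case: X_bimod => _ _ [-> _] _ _; rewrite id_lfunE. Qed.

Lemma bimod_ract1 v : ract 1 v = v.
Proof. by case: X_bimod => _ _ [_ ->] _ _; rewrite id_lfunE. Qed.

Lemma bimod_lactM x y v : lact (x * y) v = lact x (lact y v).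
Proof. by case: X_bimod => _ _ _ /(_ x y) [-> _] _; rewrite comp_lfunE. Qed.

Lemma bimod_ractM x y v : ract (x * y) v = ract y (ract x v).
Proof. by case: X_bimod => _ _ _ /(_ x y) [_ ->] _; rewrite comp_lfunE. Qed.

Lemma bimod_lractC x y v : lact x (ract y v) = ract y (lact x v).
Proof. by case: X_bimod => _ _ _ _ /(_ x y) E; rewrite -comp_lfunE E comp_lfunE. Qed.

End BiActions.

Lemma bihom_lact (X Y : bimod A) (f : 'Hom(bimod_sort X, bimod_sort Y)) :
  is_bihom f -> forall c v, f (bimod_lact X c v) = bimod_lact Y c (f v).
Proof. by move=> f_hom c v; have [E _] := f_hom c; rewrite -comp_lfunE E comp_lfunE. Qed.

Lemma bihom_ract (X Y : bimod A) (f : 'Hom(bimod_sort X, bimod_sort Y)) :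
  is_bihom f -> forall c v, f (bimod_ract X c v) = bimod_ract Y c (f v).
Proof. by move=> f_hom c v; have [_ E] := f_hom c; rewrite -comp_lfunE E comp_lfunE. Qed.

Lemma bihom_id (P : bimod A) : is_bihom (M := P) (N := P) \1%VF.
Proof. by move=> c; rewrite !comp_lfun1l !comp_lfun1r. Qed.

Definition bicoind (V : vectType K) : bimod A :=
  @BiMod K A 'Hom(A, 'Hom(A, V))
    (fun c => linfun (fun Phi : 'Hom(A, 'Hom(A, V)) =>
        (Phi \o linfun (fun x : A => x * c))%VF))
    (fun c => linfun (fun Phi : 'Hom(A, 'Hom(A, V)) =>
        (linfun (fun psi : 'Hom(A, V) => (psi \o linfun (fun y : A => c * y))%VF) \o Phi)%VF)).

Lemma bicoind_lactE (V : vectType K) c (Phi : 'Hom(A, 'Hom(A, V))) x y :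
  bimod_lact (bicoind V) c Phi x y = Phi (x * c) y.
Proof. by rewrite /= lfun_precompE comp_lfunE linfun_mulr. Qed.

Lemma bicoind_ractE (V : vectType K) c (Phi : 'Hom(A, 'Hom(A, V))) x y :
  bimod_ract (bicoind V) c Phi x y = Phi x (c * y).
Proof. by rewrite /= lfun_postcompE comp_lfunE lfun_precompE comp_lfunE linfun_mull. Qed.

Lemma bicoind_is_bimod (V : vectType K) : is_bimod (bicoind V).
Proof.
split=> [k x y|k x y|||x y];
  try split; apply/lfunP => Phi; apply/lfunP => u; apply/lfunP => w;
  rewrite ?(add_lfunE, scale_lfunE, comp_lfunE, id_lfunE) ?(bicoind_lactE, bicoind_ractE)
    ?mulr1 ?mul1r ?mulrA //.
- by rewrite mulrDr -scalerAr linearP add_lfunE scale_lfunE.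
- by rewrite mulrDl -scalerAl linearP.
Qed.

Definition bicoind_adj (X : bimod A) (V : vectType K) (t : 'Hom(bimod_sort X, V)) :
  'Hom(bimod_sort X, bimod_sort (bicoind V)) :=
  linfun3 (fun (v : bimod_sort X) (x y : A) => t (bimod_lact X x (bimod_ract X y v))).

Lemma bicoind_adjE (X : bimod A) (V : vectType K) (t : 'Hom(bimod_sort X, V)) v x y :
  is_bimod X -> bicoind_adj t v x y = t (bimod_lact X x (bimod_ract X y v)).
Proof.
move=> X_bimod; apply: linfun3E => [v' x' k y1 y2|v' y' k x1 x2|x' y' k v1 v2].
- by rewrite bimod_ractD // linearP linearP.
- by rewrite bimod_lactD // linearP.
- by rewrite !linearP.
Qed.

Lemma bicoind_adj_bihom (X : bimod A) (V : vectType K) (t : 'Hom(bimod_sort X, V)) :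
  is_bimod X -> is_bihom (N := bicoind V) (bicoind_adj t).
Proof.
move=> X_bimod c; split; apply/lfunP => v; apply/lfunP => x; apply/lfunP => y;
  rewrite !comp_lfunE ?bicoind_lactE ?bicoind_ractE !bicoind_adjE //.
  by rewrite -bimod_lractC // bimod_lactM.
by rewrite bimod_ractM.
Qed.

Lemma regular_lactE c x : bimod_lact (regular_bimod A) c x = c * x.
Proof. exact: linfun_mull. Qed.

Lemma regular_ractE c x : bimod_ract (regular_bimod A) c x = x * c.
Proof. exact: linfun_mulr. Qed.

Lemma regular_is_bimod : is_bimod (regular_bimod A).
Proof.
split=> [k x y|k x y|||x y]; try split; apply/lfunP => z;
  rewrite ?(add_lfunE, scale_lfunE, comp_lfunE, id_lfunE) ?(regular_lactE, regular_ractE)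
    ?mulr1 ?mul1r ?mulrA //.
- by rewrite mulrDl scalerAl.
- by rewrite mulrDr scalerAr.
Qed.

Lemma homk_lactE (M N : lmod A) c phi :
  bimod_lact (homk_bimod M N) c phi = (lmod_act N c \o phi)%VF.
Proof. exact: lfun_postcompE. Qed.

Lemma homk_ractE (M N : lmod A) c phi :
  bimod_ract (homk_bimod M N) c phi = (phi \o lmod_act M c)%VF.
Proof. exact: lfun_precompE. Qed.

Lemma homk_is_bimod (M N : lmod A) : is_lmod M -> is_lmod N -> is_bimod (homk_bimod M N).
Proof.
move=> M_lmod N_lmod.
split=> [k x y|k x y|||x y]; try split; apply/lfunP => phi;
  rewrite ?(add_lfunE, scale_lfunE, comp_lfunE, id_lfunE) ?(homk_lactE, homk_ractE).
- by rewrite lmod_actL // comp_lfunDl comp_lfunZl.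
- by rewrite lmod_actL // comp_lfunDr comp_lfunZr.
- by case: N_lmod => _ -> _; rewrite comp_lfun1l.
- by case: M_lmod => _ -> _; rewrite comp_lfun1r.
- by rewrite lmod_actM // comp_lfunA.
- by rewrite lmod_actM // comp_lfunA.
- by rewrite comp_lfunA.
Qed.

End Modules.

Section RegularToHomk.
Variables (K : fieldType) (A : falgType K).

Definition bihom_of (M N : lmod A) (f : 'Hom(lmod_sort M, lmod_sort N)) :
  'Hom(bimod_sort (regular_bimod A), bimod_sort (homk_bimod M N)) :=
  linfun (fun c : A => (lmod_act N c \o f)%VF).

Variables (M N : lmod A).
Hypothesis N_lmod : is_lmod N.

Lemma bihom_ofE (f : 'Hom(lmod_sort M, lmod_sort N)) c :
  bihom_of f c = (lmod_act N c \o f)%VF.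
Proof.
by rewrite linfun_linearE // => k x y; rewrite lmod_actL // comp_lfunDl comp_lfunZl.
Qed.

Lemma bihom_of_linear : linear (@bihom_of M N).
Proof.
move=> k f g; apply/lfunP => c.
by rewrite add_lfunE scale_lfunE !bihom_ofE comp_lfunDr comp_lfunZr.
Qed.

Lemma bihom_of_bihom (f : 'Hom(lmod_sort M, lmod_sort N)) :
  is_lhom f -> is_bihom (bihom_of f).
Proof.
move=> f_hom c; split; apply/lfunP => x; rewrite !comp_lfunE.
  by rewrite regular_lactE homk_lactE !bihom_ofE lmod_actM // comp_lfunA.
by rewrite regular_ractE homk_ractE !bihom_ofE lmod_actM // -!comp_lfunA f_hom.
Qed.

Section RegularBihom.
Variable g : 'Hom(bimod_sort (regular_bimod A), bimod_sort (homk_bimod M N)).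
Hypothesis g_hom : is_bihom g.

Lemma regular_bihom_lhom : is_lhom (g 1).
Proof.
move=> x; rewrite -homk_ractE -(bihom_ract g_hom) regular_ractE mul1r.
by rewrite -homk_lactE -(bihom_lact g_hom) regular_lactE mulr1.
Qed.

Lemma regular_bihomE : g = bihom_of (g 1).
Proof.
apply/lfunP => c.
by rewrite bihom_ofE -homk_lactE -(bihom_lact g_hom) regular_lactE mulr1.
Qed.

End RegularBihom.

End RegularToHomk.

Lemma bihom_of_comp (K : fieldType) (A : falgType K) (M N M' N' : lmod A)
    (u : 'Hom(lmod_sort M', lmod_sort M))
    (v : 'Hom(lmod_sort N, lmod_sort N')) (f : 'Hom(lmod_sort M, lmod_sort N)) :
  is_lmod N -> is_lmod N' -> is_lhom v ->
  bihom_of (v \o f \o u)%VF = (homk_map u v \o bihom_of f)%VF.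
Proof.
move=> N_lmod N'_lmod v_hom; apply/lfunP => c.
rewrite comp_lfunE !bihom_ofE // /homk_map linfun_linearE; last first.
  by move=> k p q; rewrite comp_lfunDr -comp_lfunZr comp_lfunDl -comp_lfunZl.
by rewrite !comp_lfunA -(v_hom c).
Qed.

Section LeftTraces.
Variables (K : fieldType) (A : falgType K) (eps : 'Hom(A, K^o)) (a b : seq A).
Hypothesis frobA : frobenius_system eps a b.
Local Notation n := (size a).

Definition ltrace (M N : lmod A) (t : 'Hom(lmod_sort M, lmod_sort N)) :
  'Hom(lmod_sort M, lmod_sort N) :=
  \sum_(i < n) (lmod_act N a`_i \o t \o lmod_act M b`_i)%VF.

Lemma ltraceE (M N : lmod A) (t : 'Hom(lmod_sort M, lmod_sort N)) m :
  ltrace t m = \sum_(i < n) lmod_act N a`_i (t (lmod_act M b`_i m)).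
Proof. by rewrite sum_lfunE; apply: eq_bigr => i _; rewrite !comp_lfunE. Qed.

Lemma ltrace_lhom (M N : lmod A) (t : 'Hom(lmod_sort M, lmod_sort N)) :
  is_lmod M -> is_lmod N -> is_lhom (ltrace t).
Proof.
move=> M_lmod N_lmod c; apply/lfunP => m; rewrite !comp_lfunE !ltraceE linear_sum.
under eq_bigr do rewrite -lmod_actMv //.
have /= <- := casimir_central frobA
  (F := fun u v => lmod_act N u (t (lmod_act M v m))) _ _ c.
- by apply: eq_bigr => i _; rewrite lmod_actMv.
- by move=> v k u1 u2; rewrite lmod_actD.
- by move=> u k v1 v2; rewrite lmod_actD // !linearP.
Qed.

Lemma comp_ltracel (M N N' : lmod A) (h : 'Hom(lmod_sort N, lmod_sort N'))
    (t : 'Hom(lmod_sort M, lmod_sort N)) :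
  is_lhom h -> (h \o ltrace t)%VF = ltrace (h \o t).
Proof.
move=> h_hom; apply/lfunP => m; rewrite comp_lfunE !ltraceE linear_sum.
by apply: eq_bigr => i _; rewrite comp_lfunE -(lhomP h_hom).
Qed.

Lemma comp_ltracer (M M' N : lmod A) (t : 'Hom(lmod_sort M, lmod_sort N))
    (g : 'Hom(lmod_sort M', lmod_sort M)) :
  is_lhom g -> (ltrace t \o g)%VF = ltrace (t \o g).
Proof.
move=> g_hom; apply/lfunP => m; rewrite comp_lfunE !ltraceE.
by apply: eq_bigr => i _; rewrite comp_lfunE (lhomP g_hom).
Qed.

Section TraceIdentity.
Variables (P : lmod A) (t : 'End(lmod_sort P)).
Hypotheses (P_lmod : is_lmod P) (id_trace : \1%VF = ltrace t).

Lemma ltrace_id_lprojective : lprojective P.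
Proof.
move=> X Y g h X_lmod Y_lmod g_hom g_onto h_hom.
exists (ltrace (g^-1 \o h \o t)%VF); first exact: ltrace_lhom.
have gK : (g \o g^-1 \o h)%VF = h.
  by apply/lfunP => p; rewrite !comp_lfunE limg_lfunVK // g_onto memvf.
by rewrite comp_ltracel // !comp_lfunA gK -comp_ltracel // -id_trace comp_lfun1r.
Qed.

Lemma ltrace_id_linjective : linjective P.
Proof.
move=> X Y g h X_lmod Y_lmod g_hom g_inj h_hom.
exists (ltrace (t \o h \o g^-1)%VF); first exact: ltrace_lhom.
rewrite comp_ltracer // -comp_lfunA lker0_compVf ?g_inj // comp_lfun1r.
by rewrite -comp_ltracer // -id_trace comp_lfun1l.
Qed.

End TraceIdentity.

Definition scale_eps (V : vectType K) : 'Hom(V, 'Hom(A, V)) :=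
  linfun2 (fun (v : V) (x : A) => (eps x : K) *: v).

Lemma scale_epsE (V : vectType K) v x : scale_eps V v x = (eps x : K) *: v.
Proof.
apply: linfun2E => [v' k x1 x2|x' k v1 v2]; first by rewrite linearP scalerDl scalerA.
by rewrite scalerDr !scalerA mulrC.
Qed.

Lemma coind_ltrace_id (V : vectType K) :
  \1%VF = ltrace (M := coind A V) (N := coind A V)
            (scale_eps V \o lfun_eval V (1 : A))%VF.
Proof.
apply/lfunP => phi; apply/lfunP => x; rewrite id_lfunE ltraceE sum_lfunE.
rewrite -{1}(frob_expandr frobA x) linear_sum; apply: eq_bigr => i _.
by rewrite linearZ coindE comp_lfunE scale_epsE lfun_evalE coindE mul1r.
Qed.

Lemma coind_lprojective (V : vectType K) : lprojective (coind A V).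
Proof. exact: ltrace_id_lprojective (coind_is_lmod A V) (coind_ltrace_id V). Qed.

Lemma coind_linjective (V : vectType K) : linjective (coind A V).
Proof. exact: ltrace_id_linjective (coind_is_lmod A V) (coind_ltrace_id V). Qed.

Lemma ltrace_coind_adj (M N : lmod A) (t : 'Hom(lmod_sort M, lmod_sort N)) :
  is_lmod M ->
  (ltrace (M := coind A (lmod_sort N)) (lfun_eval _ (1 : A)) \o coind_adj t)%VF = ltrace t.
Proof.
move=> M_lmod; apply/lfunP => m; rewrite comp_lfunE !ltraceE.
by apply: eq_bigr => i _; rewrite lfun_evalE coindE mul1r coind_adjE.
Qed.

Lemma linjective_ltrace_id (P : lmod A) :
  is_lmod P -> linjective P -> exists t, \1%VF = ltrace (M := P) (N := P) t.
Proof.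
move=> P_lmod P_inj; pose io := coind_adj (\1%VF : 'End(lmod_sort P)).
have io_hom : is_lhom io by exact: coind_adj_lhom.
have io_inj : lker io = 0%VS.
  apply/eqP/lker0P => p q /(congr1 (fun phi : 'Hom(A, _) => phi 1)).
  by rewrite !coind_adjE // !id_lfunE !lmod_act1.
have [r r_hom r_io] :=
  P_inj P (coind A _) io \1%VF P_lmod (coind_is_lmod A _) io_hom io_inj (lhom_id P).
exists (r \o (scale_eps _ \o lfun_eval _ (1 : A)) \o io)%VF.
rewrite -(comp_ltracer _ io_hom) -(comp_ltracel _ r_hom).
by rewrite -coind_ltrace_id comp_lfun1r r_io.
Qed.

Lemma lstable_zeroP (M N : lmod A) (f : 'Hom(lmod_sort M, lmod_sort N)) :
  is_lmod M -> is_lmod N -> lstable_zero f <-> exists t, f = ltrace t.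
Proof.
move=> M_lmod N_lmod; split=> [[P [P_lmod _ P_inj [g [h [g_hom h_hom ->]]]]]|[t ->]].
  have [t id_trace] := linjective_ltrace_id P_lmod P_inj.
  by exists (h \o t \o g)%VF; rewrite -comp_ltracer // -comp_ltracel // -id_trace comp_lfun1r.
exists (coind A (lmod_sort N)); split.
- exact: coind_is_lmod.
- exact: coind_lprojective.
- exact: coind_linjective.
exists (coind_adj t), (ltrace (M := coind A _) (lfun_eval _ (1 : A))); split.
- exact: coind_adj_lhom.
- exact: ltrace_lhom (coind_is_lmod A _) N_lmod.
- by rewrite ltrace_coind_adj.
Qed.

End LeftTraces.

Section BiTraces.
Variables (K : fieldType) (A : falgType K) (eps : 'Hom(A, K^o)) (a b : seq A).
Hypothesis frobA : frobenius_system eps a b.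
Local Notation n := (size a).

Definition btrace (X Y : bimod A) (t : 'Hom(bimod_sort X, bimod_sort Y)) :
  'Hom(bimod_sort X, bimod_sort Y) :=
  \sum_(i < n) \sum_(j < n) (bimod_lact Y a`_i \o bimod_ract Y b`_j \o t
                              \o bimod_lact X b`_i \o bimod_ract X a`_j)%VF.

Lemma btraceE (X Y : bimod A) (t : 'Hom(bimod_sort X, bimod_sort Y)) v :
  btrace t v = \sum_(i < n) \sum_(j < n)
    bimod_lact Y a`_i (bimod_ract Y b`_j (t (bimod_lact X b`_i (bimod_ract X a`_j v)))).
Proof.
rewrite sum_lfunE; apply: eq_bigr => i _.
by rewrite sum_lfunE; apply: eq_bigr => j _; rewrite !comp_lfunE.
Qed.

Lemma btrace_bihom (X Y : bimod A) (t : 'Hom(bimod_sort X, bimod_sort Y)) :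
  is_bimod X -> is_bimod Y -> is_bihom (btrace t).
Proof.
move=> X_bimod Y_bimod c; split; apply/lfunP => v; rewrite !comp_lfunE !btraceE.
  under eq_bigr do under eq_bigr do rewrite -bimod_lractC // -bimod_lactM //.
  have /= <- := casimir_central frobA (F := fun u w => \sum_(j < n)
    bimod_lact Y u (bimod_ract Y b`_j (t (bimod_lact X w (bimod_ract X a`_j v))))) _ _ c.
  - rewrite linear_sum; apply: eq_bigr => i _; rewrite linear_sum.
    by apply: eq_bigr => j _; rewrite bimod_lactM.
  - move=> w k u1 u2; rewrite scaler_sumr -big_split; apply: eq_bigr => j _.
    exact: bimod_lactD.
  - move=> u k w1 w2; rewrite scaler_sumr -big_split; apply: eq_bigr => j _.
    by rewrite bimod_lactD // !linearP.
rewrite exchange_big; under eq_bigr do under eq_bigr do rewrite -bimod_ractM //.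
have /= -> := casimir_central frobA (F := fun u w => \sum_(i < n)
  bimod_lact Y a`_i (bimod_ract Y w (t (bimod_lact X b`_i (bimod_ract X u v))))) _ _ c.
- rewrite linear_sum exchange_big; apply: eq_bigr => i _; rewrite linear_sum.
  by apply: eq_bigr => j _; rewrite bimod_ractM // bimod_lractC.
- move=> w k u1 u2; rewrite scaler_sumr -big_split; apply: eq_bigr => i _.
  by rewrite bimod_ractD // !linearP.
- move=> u k w1 w2; rewrite scaler_sumr -big_split; apply: eq_bigr => i _.
  by rewrite bimod_ractD // linearP.
Qed.

Lemma comp_btracel (X Y Y' : bimod A) (h : 'Hom(bimod_sort Y, bimod_sort Y'))
    (t : 'Hom(bimod_sort X, bimod_sort Y)) :
  is_bihom h -> (h \o btrace t)%VF = btrace (h \o t).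
Proof.
move=> h_hom; apply/lfunP => v; rewrite comp_lfunE !btraceE linear_sum.
apply: eq_bigr => i _; rewrite linear_sum; apply: eq_bigr => j _.
by rewrite comp_lfunE -(bihom_ract h_hom) -(bihom_lact h_hom).
Qed.

Lemma comp_btracer (X X' Y : bimod A) (t : 'Hom(bimod_sort X, bimod_sort Y))
    (g : 'Hom(bimod_sort X', bimod_sort X)) :
  is_bihom g -> (btrace t \o g)%VF = btrace (t \o g).
Proof.
move=> g_hom; apply/lfunP => v; rewrite comp_lfunE !btraceE.
apply: eq_bigr => i _; apply: eq_bigr => j _.
by rewrite comp_lfunE (bihom_lact g_hom) (bihom_ract g_hom).
Qed.

Section BiTraceIdentity.
Variables (P : bimod A) (t : 'End(bimod_sort P)).
Hypotheses (P_bimod : is_bimod P) (id_trace : \1%VF = btrace t).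

Lemma btrace_id_biprojective : biprojective P.
Proof.
move=> X Y g h X_bimod Y_bimod g_hom g_onto h_hom.
exists (btrace (g^-1 \o h \o t)%VF); first exact: btrace_bihom.
have gK : (g \o g^-1 \o h)%VF = h.
  by apply/lfunP => p; rewrite !comp_lfunE limg_lfunVK // g_onto memvf.
by rewrite comp_btracel // !comp_lfunA gK -comp_btracel // -id_trace comp_lfun1r.
Qed.

Lemma btrace_id_biinjective : biinjective P.
Proof.
move=> X Y g h X_bimod Y_bimod g_hom g_inj h_hom.
exists (btrace (t \o h \o g^-1)%VF); first exact: btrace_bihom.
rewrite comp_btracer // -comp_lfunA lker0_compVf ?g_inj // comp_lfun1r.
by rewrite -comp_btracer // -id_trace comp_lfun1l.
Qed.

End BiTraceIdentity.

Definition scale_eps2 (V : vectType K) : 'Hom(V, 'Hom(A, 'Hom(A, V))) :=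
  linfun3 (fun (v : V) (x y : A) => ((eps x : K) * (eps y : K)) *: v).

Lemma scale_eps2E (V : vectType K) v x y :
  scale_eps2 V v x y = ((eps x : K) * (eps y : K)) *: v.
Proof.
apply: linfun3E => [v' x' k y1 y2|v' y' k x1 x2|x' y' k v1 v2].
- by rewrite linearP mulrDr scalerDl mulrCA scalerA.
- by rewrite linearP mulrDl scalerDl -mulrA scalerA.
- by rewrite scalerDr !scalerA [_ * k]mulrC.
Qed.

Definition lfun_eval2 (V : vectType K) : 'Hom('Hom(A, 'Hom(A, V)), V) :=
  (lfun_eval V (1 : A) \o lfun_eval _ (1 : A))%VF.

Lemma lfun_eval2E (V : vectType K) (Phi : 'Hom(A, 'Hom(A, V))) :
  lfun_eval2 V Phi = Phi 1 1.
Proof. by rewrite comp_lfunE !lfun_evalE. Qed.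

Lemma bicoind_btrace_id (V : vectType K) :
  \1%VF = btrace (X := bicoind A V) (Y := bicoind A V) (scale_eps2 V \o lfun_eval2 V)%VF.
Proof.
apply/lfunP => Phi; apply/lfunP => x; apply/lfunP => y.
transitivity (\sum_(i < n) \sum_(j < n)
    ((eps (x * a`_i) : K) * (eps (b`_j * y) : K)) *: Phi b`_i a`_j).
  rewrite id_lfunE -{1}(frob_expandr frobA x) linear_sum sum_lfunE.
  apply: eq_bigr => i _; rewrite linearZ scale_lfunE -{1}(frob_expandl frobA y).
  by rewrite linear_sum scaler_sumr; apply: eq_bigr => j _; rewrite linearZ scalerA.
rewrite btraceE !sum_lfunE; apply: eq_bigr => i _; rewrite !sum_lfunE.
apply: eq_bigr => j _; rewrite bicoind_lactE bicoind_ractE comp_lfunE scale_eps2E.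
by rewrite lfun_eval2E bicoind_lactE bicoind_ractE mul1r mulr1.
Qed.

Lemma bicoind_biprojective (V : vectType K) : biprojective (bicoind A V).
Proof. exact: btrace_id_biprojective (bicoind_is_bimod A V) (bicoind_btrace_id V). Qed.

Lemma bicoind_biinjective (V : vectType K) : biinjective (bicoind A V).
Proof. exact: btrace_id_biinjective (bicoind_is_bimod A V) (bicoind_btrace_id V). Qed.

Lemma btrace_bicoind_adj (X Y : bimod A) (t : 'Hom(bimod_sort X, bimod_sort Y)) :
  is_bimod X ->
  (btrace (X := bicoind A _) (lfun_eval2 _) \o bicoind_adj t)%VF = btrace t.
Proof.
move=> X_bimod; apply/lfunP => v; rewrite comp_lfunE !btraceE.
apply: eq_bigr => i _; apply: eq_bigr => j _.
by rewrite lfun_eval2E bicoind_lactE bicoind_ractE mul1r mulr1 bicoind_adjE.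
Qed.

Lemma biinjective_btrace_id (P : bimod A) :
  is_bimod P -> biinjective P -> exists t, \1%VF = btrace (X := P) (Y := P) t.
Proof.
move=> P_bimod P_inj; pose io := bicoind_adj (\1%VF : 'End(bimod_sort P)).
have io_hom : is_bihom io by exact: bicoind_adj_bihom.
have io_inj : lker io = 0%VS.
  apply/eqP/lker0P => p q /(congr1 (fun Phi : 'Hom(A, 'Hom(A, _)) => Phi 1 1)).
  by rewrite !bicoind_adjE // !id_lfunE bimod_ract1 // !bimod_lact1 // bimod_ract1.
have [r r_hom r_io] := P_inj P (bicoind A _) io \1%VF P_bimod
  (bicoind_is_bimod A _) io_hom io_inj (bihom_id P).
exists (r \o (scale_eps2 _ \o lfun_eval2 _) \o io)%VF.
rewrite -(comp_btracer _ io_hom) -(comp_btracel _ r_hom).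
by rewrite -bicoind_btrace_id comp_lfun1r r_io.
Qed.

Lemma bistable_zeroP (X Y : bimod A) (f : 'Hom(bimod_sort X, bimod_sort Y)) :
  is_bimod X -> is_bimod Y -> bistable_zero f <-> exists t, f = btrace t.
Proof.
move=> X_bimod Y_bimod; split=> [[P [P_bimod _ P_inj [g [h [g_hom h_hom ->]]]]]|[t ->]].
  have [t id_trace] := biinjective_btrace_id P_bimod P_inj.
  by exists (h \o t \o g)%VF; rewrite -comp_btracer // -comp_btracel // -id_trace comp_lfun1r.
exists (bicoind A (bimod_sort Y)); split.
- exact: bicoind_is_bimod.
- exact: bicoind_biprojective.
- exact: bicoind_biinjective.
exists (bicoind_adj t), (btrace (X := bicoind A _) (lfun_eval2 _)); split.
- exact: bicoind_adj_bihom.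
- exact: btrace_bihom (bicoind_is_bimod A _) Y_bimod.
- by rewrite btrace_bicoind_adj.
Qed.

Lemma bistable_zero0 (X Y : bimod A) : bistable_zero (0 : 'Hom(bimod_sort X, bimod_sort Y)).
Proof.
exists (bicoind A (bimod_sort Y)); split.
- exact: bicoind_is_bimod.
- exact: bicoind_biprojective.
- exact: bicoind_biinjective.
exists 0, 0; split; last by rewrite comp_lfun0l.
- by move=> c; rewrite !comp_lfun0l !comp_lfun0r.
- by move=> c; rewrite !comp_lfun0l !comp_lfun0r.
Qed.

End BiTraces.

Section HomkComparison.
Variables (K : fieldType) (A : falgType K) (eps : 'Hom(A, K^o)) (a b : seq A).
Hypothesis frobA : frobenius_system eps a b.
Local Notation n := (size a).
Local Notation ltrace := (ltrace a b).
Local Notation btrace := (btrace a b).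
Local Notation scale_eps := (scale_eps eps).
Variables (M N : lmod A).
Hypotheses (M_lmod : is_lmod M) (N_lmod : is_lmod N).

Lemma bihom_of_ltrace (s : 'Hom(lmod_sort M, lmod_sort N)) :
  bihom_of (ltrace s) = btrace (X := regular_bimod A) (Y := homk_bimod M N) (scale_eps _ s).
Proof.
apply/lfunP => c; apply/lfunP => m.
rewrite bihom_ofE // comp_lfunE ltraceE linear_sum btraceE sum_lfunE.
under [RHS]eq_bigr do rewrite sum_lfunE.
rewrite exchange_big; apply: eq_bigr => j _; symmetry.
transitivity (lmod_act N (c * a`_j) (s (lmod_act M b`_j m))); last by rewrite lmod_actMv.
rewrite -(frob_expandl frobA (c * a`_j)) (linear_sumZ (f := fun u => lmod_act N u _)).
  apply: eq_bigr => i _; rewrite homk_lactE homk_ractE regular_lactE regular_ractE.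
  by rewrite !comp_lfunE scale_epsE scale_lfunE linearZ mulrA.
by move=> k u1 u2; rewrite lmod_actD.
Qed.

Lemma btrace_bihom_of (f : 'Hom(lmod_sort M, lmod_sort N)) t :
  bihom_of f = btrace (X := regular_bimod A) (Y := homk_bimod M N) t ->
  f = ltrace (\sum_(i < n) (lmod_act N a`_i \o t b`_i))%VF.
Proof.
move=> f_trace; apply/lfunP => m.
have -> : f m = bihom_of f 1 m by rewrite bihom_ofE // comp_lfunE lmod_act1.
rewrite f_trace btraceE sum_lfunE ltraceE; under eq_bigr do rewrite sum_lfunE.
rewrite exchange_big; apply: eq_bigr => j _; rewrite sum_lfunE linear_sum.
under eq_bigr do rewrite homk_lactE homk_ractE regular_lactE regular_ractE !comp_lfunE mul1r.
have /= <- := casimir_central frobA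
  (F := fun u v => lmod_act N u (t v (lmod_act M b`_j m))) _ _ a`_j.
- by apply: eq_bigr => i _; rewrite comp_lfunE lmod_actMv.
- by move=> v k u1 u2; rewrite lmod_actD.
- by move=> u k v1 v2; rewrite linearP add_lfunE scale_lfunE linearP.
Qed.

Lemma lstable_zero_bihom_of (f : 'Hom(lmod_sort M, lmod_sort N)) :
  lstable_zero f <-> bistable_zero (bihom_of f).
Proof.
have [reg homk] := (regular_is_bimod A, homk_is_bimod M_lmod N_lmod).
split=> [/(lstable_zeroP frobA _ M_lmod N_lmod) [s ->]|/(bistable_zeroP frobA _ reg homk) [t]].
  by apply/(bistable_zeroP frobA _ reg homk); exists (scale_eps _ s); exact: bihom_of_ltrace.
by move/btrace_bihom_of=> ->; apply/(lstable_zeroP frobA _ M_lmod N_lmod); eexists.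
Qed.

End HomkComparison.

Unset Implicit Arguments.
Unset Strict Implicit.

Theorem mainTheorem6 (K : fieldType) (A : falgType K) (HA : frobenius_algebra A) :
  exists Phi : forall M N : lmod A,
      'Hom(lmod_sort M, lmod_sort N) ->
      'Hom(bimod_sort (regular_bimod A), bimod_sort (homk_bimod M N)),
    (forall M N : lmod A, is_lmod M -> is_lmod N ->
      [/\ linear (Phi M N),
          forall f : 'Hom(lmod_sort M, lmod_sort N), is_lhom f -> is_bihom (Phi M N f),
          forall f : 'Hom(lmod_sort M, lmod_sort N), is_lhom f ->
            (lstable_zero f <-> bistable_zero (Phi M N f)) &
          forall g : 'Hom(bimod_sort (regular_bimod A), bimod_sort (homk_bimod M N)),
            is_bihom g ->
            exists2 f : 'Hom(lmod_sort M, lmod_sort N), is_lhom f & bistable_zero (g - Phi M N f)]) /\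
    (forall (M M' N N' : lmod A) (u : 'Hom(lmod_sort M', lmod_sort M))
            (v : 'Hom(lmod_sort N, lmod_sort N')) (f : 'Hom(lmod_sort M, lmod_sort N)),
      is_lmod M -> is_lmod M' -> is_lmod N -> is_lmod N' ->
      is_lhom u -> is_lhom v -> is_lhom f ->
      bistable_zero (Phi M' N' (v \o f \o u)%VF - (homk_map u v \o Phi M N f)%VF)).
Proof.
have [eps [a [b frobA]]] := HA.
exists (@bihom_of K A); split.
- move=> M N M_lmod N_lmod; split.
  + exact: bihom_of_linear.
  + by move=> f; apply: bihom_of_bihom.
  + by move=> f _; exact: (lstable_zero_bihom_of frobA M_lmod N_lmod f).
  + move=> g g_hom; exists (g 1); first exact: regular_bihom_lhom.
    by rewrite -regular_bihomE // subrr; apply: bistable_zero0 frobA _ _.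
- move=> M M' N N' u v f _ _ N_lmod N'_lmod _ v_hom _.
  by rewrite bihom_of_comp // subrr; apply: bistable_zero0 frobA _ _.
Qed.
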